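(* Let $(X,\leq)$ be a poset and $K$ a field. Then (1) $FI(X,K)$ is Lie nilpotent if and only if $X$ is an antichain; (2) the group of units $\mathcal{U}(FI(X,K))$ is nilpotent if and only if either $X$ is an antichain, or $K=\mathbb{F}_2$ and $X$ is bounded.
   Context: $FI(X,K)$ is the finitary incidence algebra: the $K$-vector space of formal sums $\alpha=\sum_{x\leq y}\alpha_{xy}e_{xy}$ ($x,y\in X$, $\alpha_{xy}\in K$) such that for every pair $x<y$ only finitely many $x\leq u<v\leq y$ have $\alpha_{uv}\neq0$, with convolution product $\alpha\beta=\sum_{x\leq y}\big(\sum_{x\leq z\leq y}\alpha_{xz}\beta_{zy}\big)e_{xy}$. An associative algebra $A$ is Lie nilpotent if $\gamma_n(A)=\{0\}$ for some $n$, where $\gamma_1(A)=A$, $\gamma_{n+1}(A)=[\gamma_n(A),A]$ (span of commutators $xy-yx$). $X$ is bounded if the supremum of $|C|-1$ over finite chains $C\subseteq X$ is finite. $\mathbb{F}_2$ is the field with two elements. *)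

From HB Require Import structures.
From mathcomp Require Import all_boot all_order all_algebra.
From mathcomp Require Import boolp classical_sets functions cardinality fsbigop.
Set Implicit Arguments. Unset Strict Implicit. Unset Printing Implicit Defensive.
Import Order.TTheory GRing.Theory.
Local Open Scope classical_set_scope.
Local Open Scope ring_scope.

Section FI.
Variables (d : Order.disp_t) (X : porderType d) (K : fieldType).

(* Elements of K^{X x X}; FI(X,K) is carved out by the predicate is_FI. *)
Definition mat := X -> X -> K.

Definition is_FI (a : mat) : Prop :=
  (forall x y, ~~ (x <= y)%O -> a x y = 0) /\
  (forall x y, (x < y)%O ->
     finite_set [set uv : X * X |
        [&& (x <= uv.1)%O, (uv.1 < uv.2)%O & (uv.2 <= y)%O] /\ a uv.1 uv.2 != 0]).

Definition mzero : mat := fun _ _ => 0.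
Definition mone : mat := fun x y => if x == y then 1 else 0.
Definition madd (a b : mat) : mat := fun x y => a x y + b x y.
Definition mopp (a : mat) : mat := fun x y => - a x y.
Definition mscale (k : K) (a : mat) : mat := fun x y => k * a x y.

(* convolution product (alpha beta)_xy = sum_{x <= z <= y} alpha_xz beta_zy;
   on FI(X,K) the sum has finite support, which \sum_(z \in A) exploits *)
Definition conv (a b : mat) : mat := fun x y =>
  \sum_(z \in [set z : X | (x <= z)%O && (z <= y)%O]) (a x z * b z y).

Definition lie (a b : mat) : mat := madd (conv a b) (mopp (conv b a)).

Inductive kspan (P : mat -> Prop) : mat -> Prop :=
| kspan0 : kspan P mzero
| kspan_gen a : P a -> kspan P a
| kspan_add a b : kspan P a -> kspan P b -> kspan P (madd a b)
| kspan_scale k a : kspan P a -> kspan P (mscale k a).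

(* lie_gamma n = gamma_{n+1}(FI(X,K)) *)
Fixpoint lie_gamma (n : nat) : mat -> Prop :=
  match n with
  | 0 => is_FI
  | n'.+1 => kspan (fun c => exists a b,
                 [/\ lie_gamma n' a, is_FI b & c = lie a b])
  end.

Definition Lie_nilpotent : Prop :=
  exists n, forall a, lie_gamma n a -> a = mzero.

Definition is_inv (a b : mat) : Prop :=
  [/\ is_FI a, is_FI b, conv a b = mone & conv b a = mone].
Definition is_unit (a : mat) : Prop := exists b, is_inv a b.

(* subgroup of U(FI(X,K)) generated by P (P is always a set of units below) *)
Inductive gen_subgroup (P : mat -> Prop) : mat -> Prop :=
| gs_one : gen_subgroup P mone
| gs_gen a : P a -> gen_subgroup P a
| gs_mul a b : gen_subgroup P a -> gen_subgroup P b -> gen_subgroup P (conv a b)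
| gs_inv a b : gen_subgroup P a -> is_inv a b -> gen_subgroup P b.

(* grp_gamma n = gamma_{n+1}(U): gamma_1 = U, gamma_{n+1} = [gamma_n, U],
   generated by the group commutators g^-1 h^-1 g h *)
Fixpoint grp_gamma (n : nat) : mat -> Prop :=
  match n with
  | 0 => is_unit
  | n'.+1 => gen_subgroup (fun c => exists g h gi hi,
         [/\ grp_gamma n' g, is_unit h, is_inv g gi, is_inv h hi &
             c = conv gi (conv hi (conv g h))])
  end.

Definition unit_group_nilpotent : Prop :=
  exists n, forall g, grp_gamma n g -> g = mone.

End FI.

Definition antichain (d : Order.disp_t) (X : porderType d) : Prop :=
  forall x y : X, (x <= y)%O -> x = y.

(* bounded: sup of |C| - 1 over finite chains C is finite *)
Definition bounded (d : Order.disp_t) (X : porderType d) : Prop :=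
  exists N : nat, forall s : seq X, uniq s ->
    (forall x y, x \in s -> y \in s -> (x <= y)%O || (y <= x)%O) ->
    (size s <= N.+1)%N.

Definition is_F2 (K : fieldType) : Prop := forall k : K, k = 0 \/ k = 1.

From Pilot Require Import Defs.
From HB Require Import structures.
From mathcomp Require Import all_boot all_order all_algebra.
From mathcomp Require Import boolp classical_sets functions cardinality fsbigop.
Set Implicit Arguments. Unset Strict Implicit. Unset Printing Implicit Defensive.
Import Order.TTheory GRing.Theory.
Local Open Scope classical_set_scope.
Local Open Scope ring_scope.

(* If x < y then [e_xy, e_yy] = e_xy, so e_xy survives in every term of the
   lower central series of FI(X,K) as a Lie algebra, while over an antichain
   FI(X,K) is the commutative algebra K^X.
   For the unit group: over F_2 every unit has 1 on the diagonal, and the n-th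
   term of the lower central series lies in 1 + J_n, where J_n consists of the
   elements supported on pairs u <= v joined by a chain of length n; J_n = 0 as
   soon as n exceeds the length of every chain of X.  Conversely, for a chain
   u_0 < ... < u_n the unit 1 + e_(u_0 u_n) is an iterated commutator of the
   units 1 + e_(u_i u_(i+1)); and if K contains some k other than 0 and 1,
   conjugating by the diagonal unit with entry k at x rescales e_xy, which makes
   every 1 + c e_xy the commutator of some 1 + c' e_xy with that diagonal unit. *)

Lemma fsum_seq (T : choiceType) (R : nmodType) (A : set T) (f : T -> R) (r : seq T) :
  uniq r -> (forall z, A z -> f z != 0 -> z \in r) ->
  \sum_(z \in A) f z = \sum_(z <- r | z \in A) f z.
Proof.
move=> ur cov; rewrite (fsbigE [seq z <- r | z \in A]).
- by rewrite big_filter_cond; apply: eq_bigl => z; rewrite andbb.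
- by rewrite filter_uniq.
- by move=> z /=; rewrite mem_filter => /andP[/set_mem].
- move=> z Az; rewrite mem_filter; apply: contraNeq => nz.
  by rewrite (mem_set Az) (cov z Az nz).
Qed.

Lemma not_F2_exists (K : fieldType) : ~ is_F2 K -> exists k : K, k != 0 /\ k != 1.
Proof.
move=> nF2; apply: contrapT => no; apply: nF2 => k.
case: (eqVneq k 0) => [|k0]; first by left.
case: (eqVneq k 1) => [|k1]; first by right.
by case: no; exists k.
Qed.

Section FinitaryAlgebra.
Variables (d : Order.disp_t) (X : porderType d) (K : fieldType).
Local Notation mat := (mat X K).
Local Notation is_FI := (@is_FI d X K).
Local Notation conv := (@conv d X K).
Local Notation mzero := (@mzero d X K).
Local Notation mone := (@mone d X K).

Lemma mat_ext (a b : mat) : a =2 b -> a = b.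
Proof. by move=> eq_ab; do 2!apply/funext => ?; apply: eq_ab. Qed.

Lemma conv_seq (a b : mat) x y (r : seq X) : uniq r ->
  (forall z, (x <= z)%O -> (z <= y)%O -> a x z * b z y != 0 -> z \in r) ->
  conv a b x y = \sum_(z <- r | (x <= z)%O && (z <= y)%O) a x z * b z y.
Proof.
move=> ur cov; rewrite /conv (fsum_seq ur).
  by apply: eq_bigl => z; apply/idP/idP => [/set_mem|/mem_set].
by move=> z /= /andP[]; apply: cov.
Qed.

Lemma conv_neq0 (a b : mat) x y : conv a b x y != 0 ->
  exists z, [/\ (x <= z)%O, (z <= y)%O, a x z != 0 & b z y != 0].
Proof.
move=> cnz; apply: contrapT => none; move/eqP: cnz; apply.
apply: fsbig1 => z /= /andP[xz zy]; apply/eqP; rewrite mulf_eq0.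
by apply: contraT; rewrite negb_or => /andP[az bz]; case: none; exists z.
Qed.

Lemma FI_eq0 (a : mat) x y : is_FI a -> ~~ (x <= y)%O -> a x y = 0.
Proof. by case=> + _; apply. Qed.

Definition supp_between (a : mat) x y := [set uv : X * X |
  [&& (x <= uv.1)%O, (uv.1 < uv.2)%O & (uv.2 <= y)%O] /\ a uv.1 uv.2 != 0].

Definition conv_support (a : mat) x y :=
  [set z | ((x <= z)%O && (z <= y)%O) /\ (a x z != 0 \/ a z y != 0)].

Lemma finite_conv_support (a : mat) x y : is_FI a -> finite_set (conv_support a x y).
Proof.
move=> [_ afin]; have [xy|nxy] := boolP (x < y)%O.
  apply: (sub_finite_set (B := [set x] `|` [set y] `|`
    fst @` supp_between a x y `|` snd @` supp_between a x y)); last first.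
    by rewrite !finite_setU ?finite_set1; do !split => //; apply/finite_image/afin.
  move=> z [/andP[xz zy] [az|az]].
    have [<-|xz'] := eqVneq x z; first by do 3 left.
    by right; exists (x, z) => //; split; rewrite //= lexx lt_neqAle xz' xz zy.
  have [->|zy'] := eqVneq z y; first by left; left; right.
  by left; right; exists (z, y) => //; split; rewrite //= lexx lt_neqAle zy' zy xz.
apply: (sub_finite_set (B := [set x])); last exact: finite_set1.
move=> z [/andP[xz zy] _]; apply/le_anti; rewrite xz andbT.
by move: nxy; rewrite lt_neqAle (le_trans xz zy) andbT negbK => /eqP ->.
Qed.

Lemma FI_madd a b : is_FI a -> is_FI b -> is_FI (madd a b).
Proof.
move=> [a0 afin] [b0 bfin]; split=> [x y xy|x y xy].
  by rewrite /madd a0 // b0 // addr0.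
apply: (sub_finite_set (B := supp_between a x y `|` supp_between b x y)).
  move=> [u v] /= [uv nz]; have [au|] := eqVneq (a u v) 0; last by left.
  by right; split=> //; move: nz; rewrite /madd au add0r.
by rewrite finite_setU; split; [apply: afin|apply: bfin].
Qed.

Lemma FI_mopp a : is_FI a -> is_FI (mopp a).
Proof.
move=> [a0 afin]; split=> [x y xy|x y xy]; first by rewrite /mopp a0 // oppr0.
apply: (sub_finite_set (B := supp_between a x y)); last exact: afin.
by move=> [u v] /= [uv]; rewrite /mopp oppr_eq0.
Qed.

Lemma FI_mzero : is_FI mzero.
Proof.
split=> // x y xy; apply: (sub_finite_set (B := set0)); last exact: finite_set0.
by move=> [u v] /= [_]; rewrite eqxx.
Qed.

Lemma FI_mone : is_FI mone.
Proof.
split=> [x y|x y xy]; first by rewrite /mone; case: eqP => // ->; rewrite lexx.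
apply: (sub_finite_set (B := set0)); last exact: finite_set0.
by move=> [u v] /= [/and3P[_ uv _]]; rewrite /mone lt_eqF // eqxx.
Qed.

Lemma FI_conv a b : is_FI a -> is_FI b -> is_FI (conv a b).
Proof.
move=> [a0 afin] [b0 bfin]; split=> [x y nxy|x y xy].
  apply: fsbig1 => z /= /andP[xz zy].
  by move: nxy; rewrite (le_trans xz zy).
apply: (sub_finite_set (B := supp_between a x y `|` supp_between b x y `|`
  [set (p.1, q.2) | p in supp_between a x y & q in supp_between b x y])); last first.
  rewrite !finite_setU; split; first by split; [apply: afin|apply: bfin].
  by apply: finite_image2; [apply: afin|apply: bfin].
move=> [u v] /= [/and3P[xu uv vy] /conv_neq0[z [uz zv az bz]]].
have [euz|uz'] := eqVneq u z; first by left; right; split; [rewrite xu uv vy|rewrite euz].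
have [ezv|zv'] := eqVneq z v; first by left; left; split; [rewrite xu uv vy|rewrite -ezv].
have uz'' : (u < z)%O by rewrite lt_neqAle uz' uz.
have zv'' : (z < v)%O by rewrite lt_neqAle zv' zv.
right; exists (u, z); first by split; rewrite //= xu uz'' (le_trans zv vy).
by exists (z, v); split; rewrite //= zv'' vy (le_trans xu uz).
Qed.

Definition support_seq (a c : mat) x y : seq X :=
  finmap.enum_fset (fset_set (conv_support a x y `|` conv_support c x y)).

Lemma support_seq_uniq a c x y : uniq (support_seq a c x y).
Proof. exact: finmap.fset_uniq. Qed.

Lemma mem_support_seq a c x y z : is_FI a -> is_FI c -> (x <= z)%O -> (z <= y)%O ->
  a x z != 0 \/ c z y != 0 -> z \in support_seq a c x y.
Proof.
move=> fa fc xz zy nz; rewrite /support_seq in_fset_set; last first.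
  by rewrite finite_setU; split; apply: finite_conv_support.
by case: nz => nz; apply/mem_set; [left|right]; split; rewrite ?xz ?zy //; by [left|right].
Qed.

Lemma conv_row1 a b x y q : is_FI a -> is_FI b ->
  (forall z, z != q -> a x z = 0) -> conv a b x y = a x q * b q y.
Proof.
move=> fa fb aq; rewrite (@conv_seq a b x y [:: q]) //; last first.
  by move=> z _ _; apply: contraR; rewrite mem_seq1 => /aq ->; rewrite mul0r.
rewrite big_cons big_nil addr0; case: ifPn => // /nandP[] nle.
  by rewrite (FI_eq0 fa nle) mul0r.
by rewrite (FI_eq0 fb nle) mulr0.
Qed.

Lemma conv_col1 a b x y q : is_FI a -> is_FI b ->
  (forall z, z != q -> b z y = 0) -> conv a b x y = a x q * b q y.
Proof.
move=> fa fb bq; rewrite (@conv_seq a b x y [:: q]) //; last first.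
  by move=> z _ _; apply: contraR; rewrite mem_seq1 => /bq ->; rewrite mulr0.
rewrite big_cons big_nil addr0; case: ifPn => // /nandP[] nle.
  by rewrite (FI_eq0 fa nle) mul0r.
by rewrite (FI_eq0 fb nle) mulr0.
Qed.

Lemma conv1l b : is_FI b -> conv mone b = b.
Proof.
move=> fb; apply: mat_ext => x y.
rewrite (@conv_row1 _ _ x y x FI_mone fb) => [|z]; first by rewrite /mone eqxx mul1r.
by rewrite /mone eq_sym => /negPf ->.
Qed.

Lemma conv1r a : is_FI a -> conv a mone = a.
Proof.
move=> fa; apply: mat_ext => x y.
rewrite (@conv_col1 _ _ x y y fa FI_mone) => [|z]; first by rewrite /mone eqxx mulr1.
by rewrite /mone => /negPf ->.
Qed.

Lemma convDl a b c : is_FI a -> is_FI b -> is_FI c ->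
  conv (madd a b) c = madd (conv a c) (conv b c).
Proof.
move=> fa fb fc; apply: mat_ext => x y.
have cov (e : mat) z : (x <= z)%O -> (z <= y)%O -> e x z * c z y != 0 ->
    z \in support_seq c c x y.
  by move=> xz zy; rewrite mulf_eq0 negb_or => /andP[_ cz]; apply: mem_support_seq; auto.
have ur := support_seq_uniq c c x y.
rewrite /madd (conv_seq ur (cov (madd a b))) (conv_seq ur (cov a)) (conv_seq ur (cov b)).
by rewrite -big_split; apply: eq_bigr => z _; rewrite mulrDl.
Qed.

Lemma convDr a b c : is_FI a -> is_FI b -> is_FI c ->
  conv a (madd b c) = madd (conv a b) (conv a c).
Proof.
move=> fa fb fc; apply: mat_ext => x y.
have cov (e : mat) z : (x <= z)%O -> (z <= y)%O -> a x z * e z y != 0 ->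
    z \in support_seq a a x y.
  by move=> xz zy; rewrite mulf_eq0 negb_or => /andP[az _]; apply: mem_support_seq; auto.
have ur := support_seq_uniq a a x y.
rewrite /madd (conv_seq ur (cov (madd b c))) (conv_seq ur (cov b)) (conv_seq ur (cov c)).
by rewrite -big_split; apply: eq_bigr => z _; rewrite mulrDr.
Qed.

Lemma convA a b c : is_FI a -> is_FI b -> is_FI c ->
  conv (conv a b) c = conv a (conv b c).
Proof.
move=> fa fb fc; apply: mat_ext => x y.
pose r := support_seq a c x y; have ur : uniq r := support_seq_uniq a c x y.
have memr_a z e : (x <= z)%O -> (z <= y)%O -> a x z * e != 0 -> z \in r.
  by rewrite mulf_eq0 negb_or => xz zy /andP[az _]; apply: mem_support_seq; auto.
have memr_c z e : (x <= z)%O -> (z <= y)%O -> e * c z y != 0 -> z \in r.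
  by rewrite mulf_eq0 negb_or => xz zy /andP[_ cz]; apply: mem_support_seq; auto.
rewrite (@conv_seq _ _ x y r) // => [|w]; last exact: memr_c.
rewrite [RHS](@conv_seq _ _ x y r) // => [|z]; last exact: memr_a.
transitivity (\sum_(w <- r) \sum_(z <- r)
   (if [&& (x <= z)%O, (z <= w)%O & (w <= y)%O] then a x z * b z w * c w y else 0)).
  rewrite big_mkcond; apply: eq_bigr => w _; case: ifPn => [/andP[xw wy]|nw].
    rewrite (@conv_seq _ _ x w r) // => [|z xz zw]; last exact: memr_a xz (le_trans zw wy).
    rewrite mulr_suml big_mkcond; apply: eq_bigr => z _.
    by rewrite wy andbT; case: ifP; rewrite ?mul0r.
  rewrite big1 // => z _; case: ifP => // /and3P[xz zw wy].
  by move: nw; rewrite (le_trans xz zw) wy.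
rewrite exchange_big /= [RHS]big_mkcond; apply: eq_bigr => z _.
case: ifPn => [/andP[xz zy]|nz].
  rewrite (@conv_seq _ _ z y r) // => [|w zw wy]; last exact: memr_c (le_trans xz zw) wy.
  rewrite mulr_sumr [RHS]big_mkcond; apply: eq_bigr => w _.
  by rewrite xz /=; case: ifP; rewrite ?mulr0 // mulrA.
rewrite big1 // => w _; case: ifP => // /and3P[xz zw wy].
by move: nz; rewrite xz (le_trans zw wy).
Qed.

Record FI := MkFI { fival : mat ; fivalP : is_FI fival }.

Lemma fival_inj : injective fival.
Proof. by move=> [a fa] [b fb] /= eab; subst; congr MkFI; apply: Prop_irrelevance. Qed.

Lemma FI_ext (a b : FI) : fival a =2 fival b -> a = b.
Proof. by move=> eq_ab; apply/fival_inj/mat_ext. Qed.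

HB.instance Definition _ := gen_eqMixin FI.
HB.instance Definition _ := gen_choiceMixin FI.

Definition fi0 := MkFI FI_mzero.
Definition fi1 := MkFI FI_mone.
Definition fiadd (a b : FI) := MkFI (FI_madd (fivalP a) (fivalP b)).
Definition fiopp (a : FI) := MkFI (FI_mopp (fivalP a)).
Definition fimul (a b : FI) := MkFI (FI_conv (fivalP a) (fivalP b)).

Lemma fiaddA : associative fiadd.
Proof. by move=> a b c; apply: FI_ext => x y; apply: addrA. Qed.
Lemma fiaddC : commutative fiadd.
Proof. by move=> a b; apply: FI_ext => x y; apply: addrC. Qed.
Lemma fiadd0 : left_id fi0 fiadd.
Proof. by move=> a; apply: FI_ext => x y; apply: add0r. Qed.
Lemma fiaddN : left_inverse fi0 fiopp fiadd.
Proof. by move=> a; apply: FI_ext => x y; apply: addNr. Qed.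

HB.instance Definition _ := GRing.isZmodule.Build FI fiaddA fiaddC fiadd0 fiaddN.

Lemma fimulA : associative fimul.
Proof. by move=> a b c; apply: fival_inj; exact/esym/convA/fivalP/fivalP/fivalP. Qed.
Lemma fimul1 : left_id fi1 fimul.
Proof. by move=> a; apply: fival_inj; exact: conv1l (fivalP a). Qed.
Lemma fimulr1 : right_id fi1 fimul.
Proof. by move=> a; apply: fival_inj; exact: conv1r (fivalP a). Qed.
Lemma fimulDl : left_distributive fimul fiadd.
Proof. by move=> a b c; apply: fival_inj; exact/convDl/fivalP/fivalP/fivalP. Qed.
Lemma fimulDr : right_distributive fimul fiadd.
Proof. by move=> a b c; apply: fival_inj; exact/convDr/fivalP/fivalP/fivalP. Qed.

HB.instance Definition _ :=
  GRing.Zmodule_isPzRing.Build FI fimulA fimul1 fimulr1 fimulDl fimulDr.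

Lemma fivalM (a b : FI) : fival (a * b) = conv (fival a) (fival b).
Proof. by []. Qed.

End FinitaryAlgebra.

Section MatrixUnits.
Variables (d : Order.disp_t) (X : porderType d) (K : fieldType).
Local Notation mat := (mat X K).
Local Notation is_FI := (@is_FI d X K).
Local Notation conv := (@conv d X K).
Local Notation mone := (@mone d X K).
Local Notation R := (@FI d X K).

(* c e_pq when p <= q, and 0 otherwise, so that it always lies in FI(X,K) *)
Definition emx (c : K) (p q : X) : mat :=
  fun u v => if [&& u == p, v == q & (p <= q)%O] then c else 0.

Definition diagm (f : X -> K) : mat := fun u v => if u == v then f u else 0.

Lemma FI_emx c p q : is_FI (emx c p q).
Proof.
split=> [u v|x y xy].
  by rewrite /emx; case: ifP => // /and3P[/eqP-> /eqP-> ->].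
apply: (sub_finite_set (B := [set (p, q)])); last exact: finite_set1.
move=> [u v] /= [_]; rewrite /emx.
by case: ifP => [/and3P[/eqP-> /eqP-> _]|]; rewrite ?eqxx.
Qed.

Lemma FI_diagm f : is_FI (diagm f).
Proof.
split=> [u v|x y xy]; first by rewrite /diagm; case: eqP => // ->; rewrite lexx.
apply: (sub_finite_set (B := set0)); last exact: finite_set0.
by move=> [u v] /= [/and3P[_ uv _]]; rewrite /diagm lt_eqF // eqxx.
Qed.

Lemma conv_diagml f b u v : is_FI b -> conv (diagm f) b u v = f u * b u v.
Proof.
move=> fb; rewrite (@conv_row1 _ _ _ _ _ u v u (FI_diagm f) fb) => [|z].
  by rewrite /diagm eqxx.
by rewrite /diagm eq_sym => /negPf ->.
Qed.

Lemma conv_diagmr f a u v : is_FI a -> conv a (diagm f) u v = a u v * f v.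
Proof.
move=> fa; rewrite (@conv_col1 _ _ _ _ _ u v v fa (FI_diagm f)) => [|z].
  by rewrite /diagm eqxx.
by rewrite /diagm => /negPf ->.
Qed.

Lemma conv_emxl c p q b u v : is_FI b -> (p <= q)%O ->
  conv (emx c p q) b u v = if u == p then c * b q v else 0.
Proof.
move=> fb pq; rewrite (@conv_row1 _ _ _ _ _ u v q (FI_emx c p q) fb) => [|z].
  by rewrite /emx eqxx pq andbT; case: eqP; rewrite ?mul0r.
by rewrite /emx => /negPf ->; rewrite andbF.
Qed.

Definition emxR c p q : R := MkFI (FI_emx c p q).
Definition diagR f : R := MkFI (FI_diagm f).

Lemma emxRM a b p q r : (p <= q)%O -> (q <= r)%O ->
  emxR a p q * emxR b q r = emxR (a * b) p r.
Proof.
move=> pq qr; apply: FI_ext => u v.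
rewrite /= (conv_emxl _ _ _ (FI_emx _ _ _) pq) /emx eqxx qr (le_trans pq qr) !andbT.
by case: (u == p); case: (v == r); rewrite ?mulr0.
Qed.

Lemma emxRM0 a b p q r s : (p <= q)%O -> q != r -> emxR a p q * emxR b r s = 0.
Proof.
move=> pq qr; apply: FI_ext => u v.
by rewrite /= (conv_emxl _ _ _ (FI_emx _ _ _) pq) /emx (negPf qr) mulr0; case: (u == p).
Qed.

Lemma emxRD a b p q : emxR a p q + emxR b p q = emxR (a + b) p q.
Proof.
apply: FI_ext => u v.
by rewrite /= /madd /emx; case: ifP; rewrite ?addr0.
Qed.

Lemma emxRN c p q : emxR (- c) p q = - emxR c p q.
Proof.
apply: FI_ext => u v.
by rewrite /= /mopp /emx; case: ifP; rewrite ?oppr0.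
Qed.

Lemma diagRM f g : diagR f * diagR g = diagR (f \* g).
Proof.
apply: FI_ext => u v.
rewrite /= (conv_diagml _ _ _ (FI_diagm g)) /diagm.
by case: eqP => [->|]; rewrite ?mulr0.
Qed.

Lemma diagR1 : diagR (fun=> 1) = 1.
Proof. by apply: FI_ext => u v. Qed.

Lemma oneD_emxR_neq1 c x y : (x < y)%O -> c != 0 -> fival (1 + emxR c x y) <> mone.
Proof.
move=> xy c0 /(congr1 (fun a => a x y)).
rewrite /= /madd /mone /emx (lt_eqF xy) !eqxx (ltW xy) add0r.
exact/eqP.
Qed.

End MatrixUnits.

Section LieNilpotency.
Variables (d : Order.disp_t) (X : porderType d) (K : fieldType).
Local Notation mat := (mat X K).
Local Notation is_FI := (@is_FI d X K).
Local Notation conv := (@conv d X K).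
Local Notation emx := (@emx d X K).

Lemma lie_emx_idem x y : (x < y)%O -> lie (emx 1 x y) (emx 1 y y) = emx 1 x y.
Proof.
move=> xy; apply: mat_ext => u v.
rewrite /lie /madd /mopp (conv_emxl _ _ _ (FI_emx _ _ _) (ltW xy)).
rewrite (conv_emxl _ _ _ (FI_emx _ _ _) (lexx y)).
rewrite /emx !eqxx lexx (ltW xy) (eq_sym y x) (lt_eqF xy) /= !andbT.
by case: (u == x); case: (v == y); case: (u == y); rewrite ?mul1r ?oppr0 ?addr0.
Qed.

Lemma lie_gamma_emx n x y : (x < y)%O -> lie_gamma n (emx 1 x y).
Proof.
move=> xy; elim: n => [|n IH] /=; first exact: FI_emx.
apply: kspan_gen; exists (emx 1 x y), (emx 1 y y).
by split; [|exact: FI_emx|rewrite lie_emx_idem].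
Qed.

Lemma exists_lt_of_not_antichain : ~ antichain X -> exists x y : X, (x < y)%O.
Proof.
move=> nac; apply: contrapT => nlt; apply: nac => x y xy.
apply: contrapT => nxy; apply: nlt; exists x, y.
by rewrite lt_neqAle xy andbT; apply/eqP.
Qed.

Lemma antichain_convE (a b : mat) u v : antichain X -> is_FI a -> is_FI b ->
  conv a b u v = if u == v then a u u * b u u else 0.
Proof.
move=> ac fa fb; rewrite (conv_row1 v fa fb (q := u)) => [|z zu]; last first.
  by apply: (FI_eq0 fa); apply: contra zu => /ac ->.
case: eqP => [-> //|nuv]; rewrite (FI_eq0 fb) ?mulr0 //.
by apply: contra_notN nuv => /ac.
Qed.

Lemma antichain_convC (a b : mat) : antichain X -> is_FI a -> is_FI b ->
  conv a b = conv b a.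
Proof.
move=> ac fa fb; apply: mat_ext => u v.
by rewrite !antichain_convE // mulrC.
Qed.

Lemma Lie_nilpotentP : Lie_nilpotent X K <-> antichain X.
Proof.
split=> [[n nilp]|ac].
  apply: contrapT => /exists_lt_of_not_antichain [x [y xy]].
  move: (nilp _ (lie_gamma_emx n xy)) => /(congr1 (fun a => a x y)).
  by rewrite /emx /Defs.mzero !eqxx (ltW xy); apply/eqP; apply: oner_neq0.
exists 1%N => a /=; elim=> [//|_ [b [c [fb fc ->]]]|_ _ _ -> _ ->|k _ _ ->].
- rewrite /lie (antichain_convC ac fb fc); apply: mat_ext => u v.
  by rewrite /madd /mopp addrN.
- by apply: mat_ext => u v; rewrite /madd /Defs.mzero addr0.
- by apply: mat_ext => u v; rewrite /mscale /Defs.mzero mulr0.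
Qed.

End LieNilpotency.

Section OnePlusIdentities.
Variable R : pzRingType.
Implicit Types a b e : R.

Lemma mul_oneD a b : (1 + a) * (1 + b) = 1 + (a + b + a * b).
Proof. by rewrite mulrDl mulrDr !mul1r mulrDr mulr1 !addrA (addrAC 1 b a). Qed.

Lemma mul_oneDC a b : (1 + a) * (1 + b) = (1 + b) * (1 + a) + (a * b - b * a).
Proof. by rewrite !mul_oneD -!addrA (addrCA a b) (addrC (b * a)) subrK. Qed.

Lemma oneD_sqr0_inv e : e * e = 0 -> (1 + e) * (1 - e) = 1 /\ (1 - e) * (1 + e) = 1.
Proof.
move=> ee; rewrite !mul_oneD mulrN mulNr ee oppr0 !addr0.
by rewrite subrr addNr addr0.
Qed.

Lemma oneD_rinv a b : (1 + a) * b = 1 -> b = 1 - a * b.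
Proof. by move=> ab; rewrite -ab mulrDl mul1r addrK. Qed.

Lemma commutator_oneD a b : b * a = 0 -> a * a = 0 -> b * b = 0 ->
  (1 - a) * ((1 - b) * ((1 + a) * (1 + b))) = 1 + a * b.
Proof.
move=> ba aa bb.
have bab : b * (1 + (a + b + a * b)) = b.
  by rewrite !mulrDr mulr1 ba bb mulrA ba mul0r !addr0.
have aab : a * (1 + (a + a * b)) = a.
  by rewrite !mulrDr mulr1 aa mulrA aa mul0r !addr0.
rewrite mul_oneD [(1 - b) * _]mulrBl mul1r bab (addrAC a b) addrA addrK.
by rewrite mulrBl mul1r aab addrCA addrAC subrr add0r.
Qed.

Lemma conj_oneD e1 e2 e3 D Di : Di * D = 1 -> Di * (e2 * D) = e3 ->
  e1 * e3 = 0 -> (1 + e1) * (Di * ((1 + e2) * D)) = 1 + (e1 + e3).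
Proof.
move=> DiD conj e13.
have -> : Di * ((1 + e2) * D) = 1 + e3 by rewrite mulrDl mul1r mulrDr DiD conj.
by rewrite mul_oneD e13 addr0.
Qed.

End OnePlusIdentities.

Section UnitGroup.
Variables (d : Order.disp_t) (X : porderType d) (K : fieldType).
Local Notation mat := (mat X K).
Local Notation conv := (@conv d X K).
Local Notation mone := (@mone d X K).
Local Notation R := (@FI d X K).
Local Notation emxR := (@emxR d X K).
Local Notation diagR := (@diagR d X K).

Lemma is_inv_fival (a b : R) : a * b = 1 -> b * a = 1 -> is_inv (fival a) (fival b).
Proof.
by move=> ab ba; split; [exact: fivalP|exact: fivalP|rewrite -fivalM ab|rewrite -fivalM ba].
Qed.

Lemma is_inv_lift g gi : is_inv g gi ->
  exists G GI : R, [/\ fival G = g, fival GI = gi, G * GI = 1 & GI * G = 1].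
Proof.
move=> [fg fgi ggi gig]; exists (MkFI fg), (MkFI fgi).
by split=> //; apply: fival_inj.
Qed.

Lemma is_unit_oneD (e : R) : e * e = 0 -> is_unit (fival (1 + e)).
Proof.
by move=> /oneD_sqr0_inv[??]; exists (fival (1 - e)); apply: is_inv_fival.
Qed.

Lemma antichain_unit_nilpotent : antichain X -> unit_group_nilpotent X K.
Proof.
move=> ac; exists 1%N => g /=; elim=> [//| |_ _ _ -> _ ->|_ b _ -> [_ fb ab _]].
- move=> _ [h [k [hi [ki [_ _ [fh fhi _ hih] [fk fki _ kik] ->]]]]].
  by rewrite (antichain_convC ac fh fk) -(convA fki fk fh) kik conv1l // hih.
- exact/conv1l/FI_mone.
- by rewrite -ab conv1l.
Qed.

Fixpoint has_chain (k : nat) (u v : X) : Prop :=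
  if k is k'.+1 then exists2 w, (u < w)%O & has_chain k' w v else (u <= v)%O.

Lemma has_chain_le k u z v : (u <= z)%O -> has_chain k z v -> has_chain k u v.
Proof.
case: k => [|k] /= uz; first exact: le_trans.
by case=> w zw wv; exists w => //; apply: le_lt_trans zw.
Qed.

Lemma has_chain_cat i j u z v : has_chain i u z -> has_chain j z v -> has_chain (i + j) u v.
Proof.
elim: i u => [|i IH] u /=; first exact: has_chain_le.
by case=> w uw wz zv; exists w => //; apply: IH zv.
Qed.

Lemma path_lt_comparable (u : X) s : path <%O u s ->
  {in u :: s &, forall x y, (x <= y)%O || (y <= x)%O}.
Proof.
elim: s u => [|w s IH] u.
  by move=> _ x y; rewrite !mem_seq1 => /eqP-> /eqP->; rewrite lexx.
move=> p; have /allP ltu := order_path_min lt_trans p.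
move: p => /= /andP[_ pw] x y.
rewrite !in_cons => /predU1P[->|xs] /predU1P[->|ys].
- by rewrite lexx.
- by rewrite (ltW (ltu _ ys)).
- by rewrite (ltW (ltu _ xs)) orbT.
- by apply: (IH w pw); rewrite in_cons.
Qed.

Lemma has_chain_path k u v : has_chain k u v ->
  exists2 s : seq X, size s = k & path <%O u s.
Proof.
elim: k u => [|k IH] u /=; first by exists [::].
by case=> w uw /IH[s sk ws]; exists (w :: s); rewrite /= ?sk ?uw.
Qed.

Lemma has_chain_seq k u v : has_chain k u v -> exists s : seq X,
  [/\ uniq s, {in s &, forall x y, (x <= y)%O || (y <= x)%O} & size s = k.+1].
Proof.
move=> /has_chain_path[s sk us]; exists (u :: s); split; last by rewrite /= sk.
- exact: (@lt_sorted_uniq _ _ (u :: s)).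
- exact: path_lt_comparable.
Qed.

Definition chain_supported k (a : R) := forall u v, fival a u v != 0 -> has_chain k u v.

Lemma chain_supported_base (a : R) : chain_supported 0 a.
Proof. by move=> u v; apply: contraR => /(FI_eq0 (fivalP a)) ->. Qed.

Lemma chain_supportedM i j (a b : R) :
  chain_supported i a -> chain_supported j b -> chain_supported (i + j) (a * b).
Proof.
move=> ha hb u v; rewrite fivalM => /conv_neq0[z [_ _ az bz]].
exact: has_chain_cat (ha _ _ az) (hb _ _ bz).
Qed.

Lemma chain_supportedMl k (a b : R) : chain_supported k b -> chain_supported k (a * b).
Proof. by rewrite -{2}[k]add0n; apply: chain_supportedM (@chain_supported_base a). Qed.

Lemma chain_supportedMr k (a b : R) : chain_supported k a -> chain_supported k (a * b).
Proof.
by move=> ha; rewrite -[k]addn0; apply: chain_supportedM ha (@chain_supported_base b).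
Qed.

Lemma chain_supportedD k (a b : R) :
  chain_supported k a -> chain_supported k b -> chain_supported k (a + b).
Proof.
move=> ha hb u v /=; rewrite /madd.
by have [->|/ha//] := eqVneq (fival a u v) 0; rewrite add0r => /hb.
Qed.

Lemma chain_supportedN k (a : R) : chain_supported k a -> chain_supported k (- a).
Proof. by move=> ha u v /=; rewrite /mopp oppr_eq0; apply: ha. Qed.

Lemma chain_supported_zero k : chain_supported k 0.
Proof. by move=> u v /=; rewrite /Defs.mzero eqxx. Qed.

Lemma bounded_chain_supported_eq0 : bounded X ->
  exists N, forall a : R, chain_supported N.+1 a -> a = 0.
Proof.
move=> [N bd]; exists N => a ha; apply: FI_ext => u v.
apply/eqP; apply: contraT => /ha /has_chain_seq[s [us cs sN]].
by have := bd s us cs; rewrite sN ltnn.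
Qed.

Definition in_cong k (g : mat) := exists2 a : R, chain_supported k a & g = fival (1 + a).

Lemma conv_diag (a b : mat) u : conv a b u u = a u u * b u u.
Proof.
rewrite (@conv_seq _ _ _ a b u u [:: u]) // => [|z uz zu _]; last first.
  by rewrite mem_seq1; apply/eqP/le_anti; rewrite zu uz.
by rewrite big_cons big_nil lexx addr0.
Qed.

Lemma F2_unit_in_cong1 g : is_F2 K -> is_unit g -> in_cong 1 g.
Proof.
move=> F2 [gi [fg _ ggi _]]; exists (MkFI fg - 1); last by rewrite addrC subrK.
have guu u : g u u = 1.
  have /eqP := congr1 (fun a => a u u) ggi; rewrite /= conv_diag /mone eqxx.
  by case: (F2 (g u u)) => -> //; rewrite mul0r eq_sym oner_eq0.
move=> u v /=; rewrite /madd /mopp /mone.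
have [<-|nuv] := eqVneq u v; first by rewrite guu subrr eqxx.
rewrite oppr0 addr0 => guv; exists v => //; rewrite lt_neqAle nuv /=.
by apply: contraR guv => /(FI_eq0 fg) ->.
Qed.

Lemma in_cong1 k : in_cong k mone.
Proof. by exists 0; [exact: chain_supported_zero|rewrite addr0]. Qed.

Lemma in_congM k g h : in_cong k g -> in_cong k h -> in_cong k (conv g h).
Proof.
move=> [a ha ->] [b hb ->]; exists (a + b + a * b); last by rewrite -fivalM mul_oneD.
by do 2?apply: chain_supportedD => //; apply: chain_supportedMr.
Qed.

Lemma in_congV k g gi : in_cong k g -> is_inv g gi -> in_cong k gi.
Proof.
move=> [a ha ->] /is_inv_lift[G [GI [/fival_inj Ga <- GGI _]]]; subst G.
exists (- (a * GI)); first exact/chain_supportedN/chain_supportedMr.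
by rewrite -oneD_rinv.
Qed.

Lemma in_cong_commutator n g h gi hi : in_cong n.+1 g -> in_cong 1 h ->
  is_inv g gi -> is_inv h hi -> in_cong n.+2 (conv gi (conv hi (conv g h))).
Proof.
move=> [a ha ->] [b hb ->] /is_inv_lift[G [GI [/fival_inj Ga <- _ GIG]]].
move=> /is_inv_lift[H [HI [/fival_inj Hb <- _ HIH]]].
exists (GI * (HI * (a * b - b * a))).
  apply/chain_supportedMl/chain_supportedMl/chain_supportedD.
    by rewrite -addn1; apply: chain_supportedM.
  by apply: chain_supportedN; rewrite -add1n; apply: chain_supportedM.
rewrite -!fivalM -Ga -Hb; congr fival.
by rewrite Ga Hb mul_oneDC -Ga -Hb mulrDr mulrDr [HI * (H * G)]mulrA HIH mul1r GIG.
Qed.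

Lemma grp_gamma_in_cong n g : is_F2 K -> grp_gamma n g -> in_cong n.+1 g.
Proof.
move=> F2; elim: n g => [|n IH] g /=; first exact: F2_unit_in_cong1.
elim=> [|_ [h [k [hi [ki [gh uk ihi iki ->]]]]]||].
- exact: in_cong1.
- exact: in_cong_commutator (IH _ gh) (F2_unit_in_cong1 F2 uk) ihi iki.
- by move=> ? ? _ ? _ ?; apply: in_congM.
- by move=> ? ? _ ?; apply: in_congV.
Qed.

Lemma F2_bounded_unit_nilpotent : is_F2 K -> bounded X -> unit_group_nilpotent X K.
Proof.
move=> F2 /bounded_chain_supported_eq0[N vanish]; exists N => g.
by move=> /(grp_gamma_in_cong F2)[a /vanish -> ->]; rewrite addr0.
Qed.

Definition dscale (k : K) (x : X) : R := diagR (fun u => if u == x then k else 1).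

Lemma dscaleM k l x : dscale k x * dscale l x = dscale (k * l) x.
Proof.
rewrite diagRM; congr diagR; apply/funext => u /=.
by case: (u == x); rewrite ?mulr1.
Qed.

Lemma dscale1 x : dscale 1 x = 1.
Proof. by rewrite /dscale -diagR1; congr diagR; apply/funext => u; case: (u == x). Qed.

Lemma dscale_conj k c x y : x != y ->
  dscale k^-1 x * (emxR c x y * dscale k x) = emxR (k^-1 * c) x y.
Proof.
move=> xy; apply: FI_ext => u v.
rewrite !fivalM /= (conv_diagml _ _ _ (FI_conv (FI_emx _ _ _) (FI_diagm _))).
rewrite (conv_diagmr _ _ _ (FI_emx _ _ _)) /emx.
case: (u == x); rewrite /= ?mul0r ?mulr0 //.
case: (eqVneq v y) => [->|_]; rewrite ?andbF ?mul0r ?mulr0 //= eq_sym (negPf xy).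
by case: (x <= y)%O; rewrite ?mulr1 ?mulr0.
Qed.

Lemma grp_gamma_emxR_nonF2 (k c : K) n x y : k != 0 -> k != 1 -> (x < y)%O ->
  c != 0 -> grp_gamma n (fival (1 + emxR c x y)).
Proof.
move=> k0 k1 xy; have xy' := lt_eqF xy.
have exy (a b : K) : emxR a x y * emxR b x y = 0.
  by apply: emxRM0; rewrite ?(ltW xy) // eq_sym xy'.
have k1' : k^-1 - 1 != 0.
  by rewrite subr_eq0 -[1]invr1; apply: contra k1 => /eqP/invr_inj ->.
have Dunit : dscale k^-1 x * dscale k x = 1 /\ dscale k x * dscale k^-1 x = 1.
  by rewrite !dscaleM mulVf // mulfV // dscale1.
elim: n c => [|n IH] c c0; first exact: is_unit_oneD (exy c c).
(* [1 + c' e_xy, dscale k x] = 1 + (k^-1 - 1) c' e_xy *)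
pose c' := c / (k^-1 - 1); have c'0 : c' != 0 by rewrite mulf_neq0 ?invr_eq0.
have [inv1 inv2] := oneD_sqr0_inv (exy c' c'); have [DiD DDi] := Dunit.
apply: gs_gen; exists (fival (1 + emxR c' x y)), (fival (dscale k x)),
  (fival (1 - emxR c' x y)), (fival (dscale k^-1 x)); split.
- exact: IH.
- by exists (fival (dscale k^-1 x)); apply: is_inv_fival.
- exact: is_inv_fival.
- exact: is_inv_fival.
- rewrite -!fivalM (conj_oneD (e3 := emxR (k^-1 * c') x y)) ?dscale_conj ?xy' //;
    last by rewrite mulNr exy oppr0.
  rewrite -emxRN emxRD; congr (fival (1 + emxR _ x y)).
  by rewrite /c' addrC -[X in _ - X]mul1r -mulrBl mulrC divfK.
Qed.

Lemma unit_nilpotent_F2 : (exists x y : X, (x < y)%O) ->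
  unit_group_nilpotent X K -> is_F2 K.
Proof.
move=> [x [y xy]] [n nilp]; apply: contrapT => /not_F2_exists[k [k0 k1]].
apply: (oneD_emxR_neq1 xy (oner_neq0 K)); apply: nilp.
exact: grp_gamma_emxR_nonF2 k0 k1 xy (oner_neq0 K).
Qed.

Lemma grp_gamma_chain (t : seq X) (u w : X) : path <%O u (rcons t w) ->
  grp_gamma (size t) (fival (1 + emxR 1 u w)).
Proof.
have sq0 p q : (p < q)%O -> emxR 1 p q * emxR 1 p q = 0.
  by move=> pq; apply: emxRM0; rewrite ?(ltW pq) // eq_sym lt_eqF.
elim/last_ind: t u w => [|t v IH] u w; first by case/andP => uw _; apply/is_unit_oneD/sq0.
rewrite rcons_path last_rcons => /andP[ptv vw].
have uv : (u < v)%O.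
  by apply: (allP (order_path_min lt_trans ptv)); rewrite mem_rcons mem_head.
have [uv1 uv2] := oneD_sqr0_inv (sq0 _ _ uv); have [vw1 vw2] := oneD_sqr0_inv (sq0 _ _ vw).
rewrite size_rcons /=; apply: gs_gen.
exists (fival (1 + emxR 1 u v)), (fival (1 + emxR 1 v w)),
  (fival (1 - emxR 1 u v)), (fival (1 - emxR 1 v w)); split.
- exact: IH.
- exact/is_unit_oneD/sq0.
- exact: is_inv_fival.
- exact: is_inv_fival.
- rewrite -!fivalM commutator_oneD ?sq0 ?emxRM ?(ltW uv) ?(ltW vw) ?mulr1 //.
  by apply: emxRM0; rewrite ?(ltW vw) // eq_sym (lt_eqF (lt_trans uv vw)).
Qed.

Lemma long_chain_path n (s : seq X) : uniq s ->
  {in s &, forall x y, (x <= y)%O || (y <= x)%O} -> (n.+1 < size s)%N ->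
  exists (u w : X) (t : seq X), path <%O u (rcons t w) /\ size t = n.
Proof.
move=> us cs long.
have : sorted <%O (sort <=%O s).
  rewrite lt_sorted_uniq_le sort_uniq us /=.
  by apply: (sort_sorted_in (P := [in s])) (allss s) => a b ha hb; apply: cs.
have : (n.+1 < size (sort <=%O s))%N by rewrite size_sort.
case: (sort <=%O s) => [//|u r] /= /ltnSE long' pr.
have : path <%O u (take n.+1 r).
  by move: pr; rewrite -{1}[r](cat_take_drop n.+1) cat_path => /andP[].
have : size (take n.+1 r) = n.+1 by rewrite size_takel.
case/lastP: (take n.+1 r) => [//|t w]; rewrite size_rcons => -[tn] ptw.
by exists u, w, t.
Qed.

Lemma unit_nilpotent_bounded : unit_group_nilpotent X K -> bounded X.
Proof.
move=> [n nilp]; exists n => s us cs; rewrite leqNgt; apply/negP => long.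
have [u [w [t [ptw tn]]]] := long_chain_path us cs long.
have uw : (u < w)%O.
  by apply: (allP (order_path_min lt_trans ptw)); rewrite mem_rcons mem_head.
apply: (oneD_emxR_neq1 uw (oner_neq0 K)); apply: nilp.
by rewrite -tn; apply: grp_gamma_chain.
Qed.

End UnitGroup.

Theorem corollary1p9 (d : Order.disp_t) (X : porderType d) (K : fieldType) :
  (Lie_nilpotent X K <-> antichain X) /\
  (unit_group_nilpotent X K <-> antichain X \/ (is_F2 K /\ bounded X)).
Proof.
split; first exact: Lie_nilpotentP.
split=> [nilp|[ac|[F2 bd]]].
- have [ac|/exists_lt_of_not_antichain lt_xy] := pselect (antichain X); first by left.
  by right; split; [exact: unit_nilpotent_F2 lt_xy nilp|exact: unit_nilpotent_bounded nilp].
- exact: antichain_unit_nilpotent.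
- exact: F2_bounded_unit_nilpotent.
Qed.
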